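(* Let $d \ge 3$ and let $a,b$ be integers with $1 \le a \le b < a(d-1)$. For every integer $k$ with $1 \le k \le a$, there exist a finite simple graph $H$, a vertex $r$ of $H$, and an additional ''attachment edge'' $e$ incident to $r$ (whose other endpoint lies outside $H$), such that every vertex of $H$ has degree at most $d$ when $e$ is counted at $r$, and: (i) if $e$ is given label $2k$, then there is an assignment of nonnegative integer labels to the edges of $H$ such that every vertex of $H$ is valid and every vertex of $H$ is joined to $r$ by a path of edges of $H$ with positive labels; (ii) for every integer $x$ with $0 \le x < 2k$, if $e$ is given label $x$, then no assignment of nonnegative integer labels to the edges of $H$ has both properties in (i).
   Context: Given fixed $a \le b$ and labels on the edges of $H$ and on $e$, a vertex $v$ of $H$ is called valid if the sum of the labels of all edges incident to $v$ (including $e$ if $v=r$) is even and lies in the interval $[2a,2b]$. *)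

From mathcomp Require Import all_boot.
Set Implicit Arguments. Unset Strict Implicit. Unset Printing Implicit Defensive.

Definition simple_graph (V : finType) (adj : rel V) : Prop :=
  symmetric adj /\ irreflexive adj.

Definition deg (V : finType) (adj : rel V) (v : V) : nat := #|[set u | adj v u]|.

(* Edge labelings: the label of edge uv is lab [set u; v] (values on
   non-edges are irrelevant). *)
Definition labeling (V : finType) := {set V} -> nat.

(* Sum of labels at v, including the attachment edge e (label x) if v = r. *)
Definition label_sum (V : finType) (adj : rel V) (r : V) (x : nat)
  (lab : labeling V) (v : V) : nat :=
  \sum_(u | adj v u) lab [set v; u] + (if v == r then x else 0).

Definition valid (a b : nat) (V : finType) (adj : rel V) (r : V) (x : nat)
  (lab : labeling V) (v : V) : bool :=
  ~~ odd (label_sum adj r x lab v) &&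
  (2 * a <= label_sum adj r x lab v <= 2 * b).

Definition pos_rel (V : finType) (adj : rel V) (lab : labeling V) : rel V :=
  fun u w => adj u w && (0 < lab [set u; w]).

Definition good_labeling (a b : nat) (V : finType) (adj : rel V) (r : V)
  (x : nat) (lab : labeling V) : Prop :=
  (forall v, valid a b adj r x lab v) /\
  (forall v, connect (pos_rel adj lab) v r).

From mathcomp Require Import all_boot zify.

(* A rooted graph [G] accepts [x] when it has a good labeling with attachment
   label [x].  This is governed by the sums [s] at the root of labelings that
   are good away from the root: [G] accepts [x] iff [s + x] is even and lies in
   [[2a, 2b]] for one of them.  Hanging a gadget [C] below the root adds to [s]
   any positive label that [C] accepts, so extreme root sums add up.  A single
   vertex accepts exactly the even labels of [[2a, 2b]], a triangle accepts 2
   as least positive label.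

   A root carrying [J] single vertices, [e <= 1] triangles and possibly a
   gadget whose least accepted label is [2g] has least root sum
   [2g + 2aJ + 2e]; with an attachment edge it accepts labels up to
   [2u = 2b - (2g + 2aJ + 2e)], and hung below a new root it becomes a gadget
   whose least accepted label is [2(a - u)].  Writing [b = aq + rho], this
   turns [g] into [g - rho] and, when [g = 0] or [g >= rho - 1], into
   [g + 1 - rho] (mod [a]), within the degree bound since [q <= d - 2].  These
   two moves reach every residue below [a]; the case [k = a] is the single
   vertex. *)

Set Implicit Arguments.

Lemma connect_map (T1 T2 : finType) (e1 : rel T1) (e2 : rel T2) (f : T1 -> T2) :
  (forall x y, e1 x y -> connect e2 (f x) (f y)) ->
  forall x y, connect e1 x y -> connect e2 (f x) (f y).
Proof.
move=> fe x y /connectP [p + ->] {y}.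
elim: p x => [|z p IH] x /=; first by rewrite connect0.
by case/andP=> /fe exz /IH; apply: connect_trans.
Qed.
Arguments connect_map {T1 T2 e1 e2 f} _ {x y}.

Lemma connect_invariant (T : finType) (T' : Type) (e : rel T) (f : T -> T') :
  (forall x y, e x y -> f x = f y) -> forall x y, connect e x y -> f x = f y.
Proof.
move=> fe x y /connectP [p + ->] {y}.
by elim: p x => [|z p IH] x //= /andP [/fe -> /IH].
Qed.
Arguments connect_invariant {T T' e f} _ {x y}.

Lemma label_sum_attachment (V : finType) (adj : rel V) r x (lab : labeling V) v :
  label_sum adj r x lab v = label_sum adj r 0 lab v + (if v == r then x else 0).
Proof. by rewrite /label_sum if_same addn0. Qed.

Record rgraph := RGraph { rvert : finType; radj : rel rvert; rroot : rvert }.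

Section Attach.
Variables G C : rgraph.
Local Notation V := (rvert G + rvert C)%type.

Definition attach_adj : rel V := fun u v =>
  match u, v with
  | inl u, inl v => radj G u v
  | inr u, inr v => radj C u v
  | inl u, inr v => (u == rroot G) && (v == rroot C)
  | inr u, inl v => (u == rroot C) && (v == rroot G)
  end.
Definition attach := RGraph V attach_adj (inl (rroot G)).
Definition bridge : {set V} := [set inl (rroot G); inr (rroot C)].

Definition lab_left (lab : labeling V) : labeling (rvert G) := fun S => lab (inl @: S).
Definition lab_right (lab : labeling V) : labeling (rvert C) := fun S => lab (inr @: S).

Definition lab_join (labG : labeling (rvert G)) (labC : labeling (rvert C)) y : labeling V :=
  fun S => if S == bridge then y
           else if inl @^-1: S != set0 then labG (inl @^-1: S)
           else labC (inr @^-1: S).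

Lemma attach_simple : simple_graph (radj G) -> simple_graph (radj C) ->
  simple_graph attach_adj.
Proof.
case=> sG iG [sC iC]; split.
  case=> u [v|v] /=; [exact: sG | exact: andbC | exact: andbC | exact: sC].
by case=> u /=; [exact: iG | exact: iC].
Qed.

Lemma deg_attach_inl v : deg attach_adj (inl v) = deg (radj G) v + (v == rroot G).
Proof.
rewrite /deg -!sum1dep_card big_sumType; congr (_ + _).
case: (eqVneq v (rroot G)) => [->|ne].
  by rewrite (big_pred1 (rroot C)) ?eqxx // => i; rewrite /= eqxx.
by rewrite big_pred0 // => i; rewrite /= (negbTE ne).
Qed.

Lemma deg_attach_inr w : deg attach_adj (inr w) = deg (radj C) w + (w == rroot C).
Proof.
rewrite /deg -!sum1dep_card big_sumType [X in X = _]addnC; congr (_ + _).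
case: (eqVneq w (rroot C)) => [->|ne].
  by rewrite (big_pred1 (rroot G)) ?eqxx // => i; rewrite /= eqxx.
by rewrite big_pred0 // => i; rewrite /= (negbTE ne).
Qed.

Lemma label_sum_attach_inl lab v :
  label_sum attach_adj (inl (rroot G)) 0 lab (inl v) =
  label_sum (radj G) (rroot G) 0 (lab_left lab) v +
  (if v == rroot G then lab bridge else 0).
Proof.
rewrite /label_sum !if_same !addn0 big_sumType; congr (_ + _).
  by apply: eq_bigr => u _; rewrite /lab_left imsetU1 imset_set1.
case: (eqVneq v (rroot G)) => [->|ne].
  by rewrite (big_pred1 (rroot C)) // => i; rewrite /= eqxx.
by rewrite big_pred0 // => i; rewrite /= (negbTE ne).
Qed.

Lemma label_sum_attach_inr lab w :
  label_sum attach_adj (inl (rroot G)) 0 lab (inr w) =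
  label_sum (radj C) (rroot C) 0 (lab_right lab) w +
  (if w == rroot C then lab bridge else 0).
Proof.
rewrite /label_sum !if_same !addn0 big_sumType [X in X = _]addnC; congr (_ + _).
  by apply: eq_bigr => u _; rewrite /lab_right imsetU1 imset_set1.
case: (eqVneq w (rroot C)) => [->|ne].
  by rewrite (big_pred1 (rroot G)) /bridge 1?setUC // => i; rewrite /= eqxx.
by rewrite big_pred0 // => i; rewrite /= (negbTE ne).
Qed.

Lemma lab_join_left labG labC y v u :
  lab_left (lab_join labG labC y) [set v; u] = labG [set v; u].
Proof.
rewrite /lab_left /lab_join imsetU1 imset_set1.
have -> : ([set inl v; inl u] == bridge) = false.
  apply/negbTE/eqP => /setP /(_ (inr (rroot C))).
  by rewrite /bridge !inE eqxx orbT.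
have -> : inl @^-1: [set inl v; inl u : V] = [set v; u] by apply/setP => x; rewrite !inE.
by have -> : [set v; u] != set0 by apply/set0Pn; exists v; rewrite !inE eqxx.
Qed.

Lemma lab_join_right labG labC y v u :
  lab_right (lab_join labG labC y) [set v; u] = labC [set v; u].
Proof.
rewrite /lab_right /lab_join imsetU1 imset_set1.
have -> : ([set inr v; inr u] == bridge) = false.
  apply/negbTE/eqP => /setP /(_ (inl (rroot G))).
  by rewrite /bridge !inE eqxx.
have -> : inl @^-1: [set inr v; inr u : V] = set0 by apply/setP => x; rewrite !inE.
have -> : inr @^-1: [set inr v; inr u : V] = [set v; u] by apply/setP => x; rewrite !inE.
by rewrite eqxx.
Qed.

Lemma lab_join_bridge labG labC y : lab_join labG labC y bridge = y.
Proof. by rewrite /lab_join eqxx. Qed.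

End Attach.

Definition point := RGraph unit (fun _ _ => false) tt.
Definition triangle := RGraph 'I_3 (fun u v => u != v) ord0.

Section Shapes.
Variable d : nat.

Definition rooted_shape (G : rgraph) n :=
  [/\ simple_graph (radj G), forall v, v != rroot G -> deg (radj G) v <= d &
      deg (radj G) (rroot G) = n].

Definition closed_shape (G : rgraph) :=
  simple_graph (radj G) /\ forall v, deg (radj G) v + (v == rroot G) <= d.

Lemma rooted_shape_attach G C n :
  rooted_shape G n -> closed_shape C -> rooted_shape (attach G C) n.+1.
Proof.
case=> simG degG rootG [simC degC]; split; first exact: attach_simple.
  move=> [v|w] /= vr; last by rewrite deg_attach_inr.
  have /negbTE vr' : v != rroot G := vr.
  by rewrite deg_attach_inl vr' addn0 degG.
by rewrite deg_attach_inl eqxx rootG addn1.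
Qed.

Lemma closed_shape_rooted G n : rooted_shape G n -> n < d -> closed_shape G.
Proof.
case=> simG degG rootG nd; split=> // v.
case: (eqVneq v (rroot G)) => [->|vr]; first by rewrite rootG addn1.
by rewrite addn0 degG.
Qed.

Lemma rooted_shape_point : rooted_shape point 0.
Proof.
by split=> [| [] | ]; rewrite ?eqxx // /deg -sum1dep_card big_pred0.
Qed.

Lemma deg_triangle v : deg (radj triangle) v = 2.
Proof.
rewrite /deg -sum1dep_card big_mkcond !big_ord_recl big_ord0.
by case: v => [[|[|[|?]]] p].
Qed.

Lemma closed_shape_triangle : 2 < d -> closed_shape triangle.
Proof.
move=> d3; split.
  by split=> [u v | u] /=; rewrite ?eqxx // eq_sym.
by move=> v; rewrite deg_triangle; case: (v == _); lia.
Qed.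

End Shapes.

Section Labelings.
Variables a b : nat.

Definition valid_sum n := ~~ odd n && (2 * a <= n <= 2 * b).

(* Good at every vertex but the root; off the root the attachment label given
   to [valid] is irrelevant. *)
Definition admissible (G : rgraph) (lab : labeling (rvert G)) :=
  (forall v, v != rroot G -> valid a b (radj G) (rroot G) 0 lab v) /\
  (forall v, connect (pos_rel (radj G) lab) v (rroot G)).

Definition root_sum (G : rgraph) (lab : labeling (rvert G)) :=
  label_sum (radj G) (rroot G) 0 lab (rroot G).

Definition root_sum_of (G : rgraph) s := exists2 lab, admissible G lab & root_sum G lab = s.

Definition accepts (G : rgraph) x := exists lab, good_labeling a b (radj G) (rroot G) x lab.

Lemma good_labelingE G x lab :
  good_labeling a b (radj G) (rroot G) x lab <->
  admissible G lab /\ valid_sum (root_sum G lab + x).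
Proof.
rewrite /good_labeling /admissible /valid /root_sum; split.
- case=> hv hc; split; first split=> // v /negbTE vr.
    by move: (hv v); rewrite label_sum_attachment vr addn0.
  by move: (hv (rroot G)); rewrite label_sum_attachment eqxx.
- case=> [[hv hc] hr]; split=> // v.
  case: (eqVneq v (rroot G)) => [->|vr]; first by rewrite label_sum_attachment eqxx.
  by rewrite label_sum_attachment (negbTE vr) addn0; apply: hv.
Qed.

Lemma acceptsE G x : accepts G x <-> exists2 s, root_sum_of G s & valid_sum (s + x).
Proof.
split=> [[lab /good_labelingE [adm ok]] | [s [lab adm <-] ok]].
  by exists (root_sum G lab) => //; exists lab.
by exists lab; apply/good_labelingE.
Qed.

Section AttachLabelings.
Variables G C : rgraph.
Local Notation V := (rvert G + rvert C)%type.

Lemma admissible_attach_restrict lab : admissible (attach G C) lab ->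
  [/\ admissible G (lab_left G C lab), 0 < lab (bridge G C),
      good_labeling a b (radj C) (rroot C) (lab (bridge G C)) (lab_right G C lab) &
      root_sum (attach G C) lab = root_sum G (lab_left G C lab) + lab (bridge G C)].
Proof.
case=> hv hc; split.
- split=> [v vr | v].
    by have := hv (inl v) vr; rewrite /valid /= !label_sum_attach_inl (negbTE vr) addn0.
  apply: (connect_map (f := fun u : V => if u is inl u then u else rroot G)
                      _ (hc (inl v))).
  move=> [u|u] [u'|u']; rewrite /pos_rel /=.
  + by move=> h; apply: connect1; rewrite /lab_left imsetU1 imset_set1.
  + by case/andP => /andP [/eqP -> _] _; apply: connect0.
  + by case/andP => /andP [_ /eqP ->] _; apply: connect0.
  + by move=> _; apply: connect0.
- rewrite lt0n; apply/negP => /eqP b0.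
  (* With a zero bridge label no positive path crosses from [C] to [G]. *)
  suff : false = true by [].
  apply: (connect_invariant (f := fun u : V => if u is inl _ then true else false)
                            _ (hc (inr (rroot C)))) => -[u|u] [u'|u'] //=;
    rewrite /pos_rel /= => /andP [/andP [/eqP -> /eqP ->]].
    by rewrite -/(bridge G C) b0.
  by rewrite setUC -/(bridge G C) b0.
- split=> [w | w].
    have := hv (inr w) isT; rewrite /valid /= !label_sum_attach_inr.
    by rewrite (label_sum_attachment (radj C) (rroot C) (lab (bridge G C))).
  apply: (connect_map (f := fun u : V => if u is inr u then u else rroot C)
                      _ (hc (inr w))).
  move=> [u|u] [u'|u']; rewrite /pos_rel /=.
  + by move=> _; apply: connect0.
  + by case/andP => /andP [_ /eqP ->] _; apply: connect0.
  + by case/andP => /andP [/eqP -> _] _; apply: connect0.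
  + by move=> h; apply: connect1; rewrite /lab_right imsetU1 imset_set1.
- by rewrite /root_sum /= label_sum_attach_inl eqxx.
Qed.

Lemma admissible_attach_extend labG labC y :
  admissible G labG -> good_labeling a b (radj C) (rroot C) y labC -> 0 < y ->
  exists2 lab, admissible (attach G C) lab &
               root_sum (attach G C) lab = root_sum G labG + y.
Proof.
move=> [hvG hcG] [hvC hcC] y0; set lab := lab_join G C labG labC y.
have sumL v : label_sum (radj G) (rroot G) 0 (lab_left G C lab) v =
              label_sum (radj G) (rroot G) 0 labG v.
  by congr (_ + _); apply: eq_bigr => u _; rewrite lab_join_left.
have sumR w : label_sum (radj C) (rroot C) 0 (lab_right G C lab) w =
              label_sum (radj C) (rroot C) 0 labC w.
  by congr (_ + _); apply: eq_bigr => u _; rewrite lab_join_right.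
exists lab.
  2: by rewrite /root_sum /= label_sum_attach_inl sumL eqxx /lab lab_join_bridge.
split=> [[v|w] /= | [v|w] /=].
- move=> vr; have /negbTE vr' : v != rroot G := vr; move: (hvG v vr).
  by rewrite /valid !label_sum_attach_inl sumL vr' addn0.
- move=> _; move: (hvC w).
  rewrite /valid !label_sum_attach_inr sumR /lab lab_join_bridge.
  by rewrite (label_sum_attachment (radj C) (rroot C) y).
- apply: (connect_map (f := inl) _ (hcG v)) => u u' h; apply: connect1.
  move: h; rewrite /pos_rel /= -(lab_join_left G C labG labC y).
  by rewrite /lab_left imsetU1 imset_set1.
- apply: (@connect_trans _ _ (inr (rroot C))).
    apply: (connect_map (f := inr) _ (hcC w)) => u u' h; apply: connect1.
    move: h; rewrite /pos_rel /= -(lab_join_right G C labG labC y).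
    by rewrite /lab_right imsetU1 imset_set1.
  apply: connect1; rewrite /pos_rel /= !eqxx /=.
  by rewrite setUC -/(bridge G C) /lab lab_join_bridge.
Qed.

Lemma root_sum_of_attach t : root_sum_of (attach G C) t <->
  exists s y, [/\ root_sum_of G s, 0 < y, accepts C y & t = s + y].
Proof.
split=> [[lab /admissible_attach_restrict [adm y0 gC ->] <-] |
         [s [y [[labG adm <-] y0 [labC gC] ->]]]].
  by exists (root_sum G (lab_left G C lab)), (lab (bridge G C)); split=> //;
     [exists (lab_left G C lab) | exists (lab_right G C lab)].
by have [lab] := admissible_attach_extend adm gC y0; exists lab.
Qed.

End AttachLabelings.

Definition least_root_sum G s := root_sum_of G s /\ forall t, root_sum_of G t -> s <= t.
Definition greatest_root_sum G s := root_sum_of G s /\ forall t, root_sum_of G t -> t <= s.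
Definition least_accepted C c := accepts C c /\ forall x, accepts C x -> c <= x.
Definition least_pos_accepted C c := accepts C c /\ forall x, 0 < x -> accepts C x -> c <= x.
Definition greatest_pos_accepted C c := accepts C c /\ forall x, 0 < x -> accepts C x -> x <= c.

Lemma least_pos_accepted_least C c : least_accepted C c -> least_pos_accepted C c.
Proof. by case=> hc cle; split=> // x _; apply: cle. Qed.

Lemma least_root_sum_attach G C s c :
  least_root_sum G s -> least_pos_accepted C c -> 0 < c ->
  least_root_sum (attach G C) (s + c).
Proof.
move=> [hs sle] [hc cle] c0; split; first by apply/root_sum_of_attach; exists s, c.
by move=> _ /root_sum_of_attach [s' [y [/sle ? y0 /(cle _ y0) ? ->]]]; apply: leq_add.
Qed.

Lemma greatest_root_sum_attach G C s c :
  greatest_root_sum G s -> greatest_pos_accepted C c -> 0 < c ->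
  greatest_root_sum (attach G C) (s + c).
Proof.
move=> [hs sle] [hc cle] c0; split; first by apply/root_sum_of_attach; exists s, c.
by move=> _ /root_sum_of_attach [s' [y [/sle ? y0 /(cle _ y0) ? ->]]]; apply: leq_add.
Qed.

Lemma root_sum_of_point s : root_sum_of point s <-> s = 0.
Proof.
have sum0 lab : root_sum point lab = 0 by rewrite /root_sum /label_sum big_pred0.
split=> [[lab _ <-] | ->]; first exact: sum0.
by exists (fun _ => 0); [split=> [[] | []] //; apply: connect0 | apply: sum0].
Qed.

Lemma least_root_sum_point : least_root_sum point 0.
Proof. by split=> [|t /root_sum_of_point ->]; first apply/root_sum_of_point. Qed.

Lemma greatest_root_sum_point : greatest_root_sum point 0.
Proof. by split=> [|t /root_sum_of_point ->]; first apply/root_sum_of_point. Qed.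

Hypothesis leq_ab : a <= b.

Lemma valid_sum_lower : valid_sum (2 * a).
Proof. by rewrite /valid_sum oddM /= leqnn leq_mul2l leq_ab orbT. Qed.

Lemma valid_sum_upper : valid_sum (2 * b).
Proof. by rewrite /valid_sum oddM /= leqnn leq_mul2l leq_ab orbT. Qed.

Lemma least_accepted_point : least_accepted point (2 * a).
Proof.
split; first by apply/acceptsE; exists 0; [apply/root_sum_of_point | exact: valid_sum_lower].
by move=> x /acceptsE [_ /root_sum_of_point -> /andP [_ /andP [? _]]].
Qed.

Lemma greatest_pos_accepted_close G s t :
  least_root_sum G s -> s + t = 2 * b -> greatest_pos_accepted G t.
Proof.
move=> [hs sle] st; split; first by apply/acceptsE; exists s; rewrite // st valid_sum_upper.
move=> x _ /acceptsE [s' /sle ? /andP [_ /andP [_ ?]]]; lia.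
Qed.

Lemma least_accepted_close G s t :
  greatest_root_sum G s -> s + t = 2 * a -> least_accepted G t.
Proof.
move=> [hs sle] st; split; first by apply/acceptsE; exists s; rewrite // st valid_sum_lower.
move=> x /acceptsE [s' /sle ? /andP [_ /andP [? _]]]; lia.
Qed.

End Labelings.

Definition tri1 : 'I_3 := @Ordinal 3 1 isT.
Definition tri2 : 'I_3 := @Ordinal 3 2 isT.

Lemma label_sum_triangle x lab v :
  label_sum (radj triangle) ord0 x lab v =
  if v == ord0 then lab [set ord0; tri1] + lab [set ord0; tri2] + x
  else if v == tri1 then lab [set ord0; tri1] + lab [set tri1; tri2]
  else lab [set ord0; tri2] + lab [set tri1; tri2].
Proof.
rewrite /label_sum big_mkcond !big_ord_recl big_ord0 /=.
have -> : lift ord0 ord0 = tri1 :> 'I_3 by apply: val_inj.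
have -> : lift ord0 (lift ord0 ord0) = tri2 :> 'I_3 by apply: val_inj.
case: v => [[|[|[|?]]] p] //.
- have -> : Ordinal p = ord0 by apply: val_inj.
  by rewrite !addn0 add0n.
- have -> : Ordinal p = tri1 by apply: val_inj.
  by rewrite /= add0n !addn0 setUC.
- have -> : Ordinal p = tri2 by apply: val_inj.
  by rewrite /= add0n !addn0 setUC [[set tri2; tri1]]setUC.
Qed.

Lemma least_pos_accepted_triangle a b :
  1 < a -> a <= b -> least_pos_accepted a b triangle 2.
Proof.
move=> a2 ab; split.
  exists (fun S : {set 'I_3} => if ord0 \in S then a.-1 else a.+1); split=> v.
    rewrite /valid /= label_sum_triangle !inE /=.
    have -> : a.-1 + a.-1 + 2 = 2 * a by lia.
    have -> : a.-1 + a.+1 = 2 * a by lia.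
    by rewrite !if_same; exact: (valid_sum_lower _ _ ab).
  case: (eqVneq v ord0) => [->|vn]; first exact: connect0.
  by apply: connect1; rewrite /pos_rel /= vn !inE eqxx orbT; lia.
move=> x x0 [lab [hv _]]; move: (hv ord0) (hv tri1) (hv tri2).
rewrite /valid /= !label_sum_triangle /= => /andP [h0 _] /andP [h1 _] /andP [h2 _].
(* The three label sums add up to twice the total label plus [x]. *)
have : ~~ odd x.
  move: h0 h1 h2; rewrite !oddD.
  by case: (odd (lab [set ord0; tri1])); case: (odd (lab [set ord0; tri2]));
     case: (odd (lab [set tri1; tri2])); case: (odd x).
by clear -x0; case: x x0 => [|[|x]].
Qed.

Section Gadgets.
Variables a b d : nat.
Hypothesis leq_ab : a <= b.

Definition threshold_gadget g :=
  exists2 C, closed_shape d C & least_accepted a b C (2 * g).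
(* [g = 0] stands for hanging no gadget at all. *)
Definition realizable g := g = 0 \/ threshold_gadget g.
Definition star n s := exists2 G, rooted_shape d G n & least_root_sum a b G s.

Lemma threshold_gadget_point : 0 < d -> threshold_gadget a.
Proof.
move=> d0; exists point; last exact: least_accepted_point.
exact: closed_shape_rooted (rooted_shape_point d) d0.
Qed.

Lemma star_point : star 0 0.
Proof.
by exists point; [exact: rooted_shape_point | exact: least_root_sum_point].
Qed.

Lemma star_attach n s C c : star n s -> closed_shape d C ->
  least_pos_accepted a b C c -> 0 < c -> star n.+1 (s + c).
Proof.
case=> G shG lsG shC lC c0; exists (attach G C); first exact: rooted_shape_attach.
exact: least_root_sum_attach.
Qed.

Lemma star_leaves n s J : 0 < d -> 0 < a -> star n s -> star (n + J) (s + 2 * a * J).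
Proof.
move=> d0 a0; elim: J n s => [|J IH] n s st; first by rewrite !addn0 muln0 addn0.
rewrite -addSnnS mulnS addnA; apply: IH.
apply: star_attach st _ (least_pos_accepted_least (least_accepted_point _ _ leq_ab)) _.
  exact: closed_shape_rooted (rooted_shape_point d) d0.
by rewrite muln_gt0.
Qed.

Lemma star_realizable g : realizable g -> star (0 < g) (2 * g).
Proof.
case: (posnP g) => [-> _ | g0 [g_eq0 | [C shC lC]]]; first exact: star_point.
  by move: g0; rewrite g_eq0.
rewrite -[2 * g]add0n; apply: star_attach star_point shC (least_pos_accepted_least lC) _.
by rewrite muln_gt0.
Qed.

Lemma threshold_of_star n s u g : 1 < d -> star n s -> n < d ->
  s + 2 * u = 2 * b -> 0 < u -> u + g = a -> threshold_gadget g.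
Proof.
move=> d2 [W shW lsW] nd su u0 ug.
have gW := greatest_pos_accepted_close leq_ab _ lsW su.
exists (attach point W).
  apply: closed_shape_rooted d2.
  exact: rooted_shape_attach (rooted_shape_point d) (closed_shape_rooted shW nd).
apply: (least_accepted_close leq_ab (s := 0 + 2 * u)); last lia.
by apply: greatest_root_sum_attach (greatest_root_sum_point a b) gW _; rewrite muln_gt0.
Qed.

Hypotheses (d3 : 2 < d) (a2 : 1 < a).

Lemma realizable_step g J e u g' : realizable g -> e <= 1 ->
  (0 < g) + J + e < d -> g + a * J + e + u = b -> 0 < u -> u + g' = a ->
  threshold_gadget g'.
Proof.
move=> rg e1 deg_ok sum u0 ug.
have st := star_leaves J (ltnW (ltnW d3)) (ltnW a2) (star_realizable rg).
have st' : star ((0 < g) + J + e) (2 * g + 2 * a * J + 2 * e).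
  case: e e1 {deg_ok sum} => [|[|//]] _; first by rewrite !addn0.
  rewrite addn1 muln1; apply: star_attach st (closed_shape_triangle _ d3) _ _ => //.
  exact: least_pos_accepted_triangle a2 leq_ab.
apply: threshold_of_star (ltnW d3) st' deg_ok _ u0 ug; lia.
Qed.

Hypothesis lt_b_ad : b < a * (d - 1).

Let rho := b %% a.
Let q := b %/ a.

Lemma b_eq : b = a * q + rho. Proof. by rewrite mulnC; exact: divn_eq. Qed.
Lemma rho_lt : rho < a. Proof. by rewrite /rho ltn_pmod //; lia. Qed.
Lemma q_gt0 : 0 < q. Proof. by rewrite /q divn_gt0 //; lia. Qed.
Lemma q_le : q <= d - 2.
Proof.
have : q < d - 1 by rewrite /q ltn_divLR; [rewrite mulnC | lia].
lia.
Qed.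

Lemma mul_pred_q : a * q.-1 + a = a * q.
Proof. by rewrite -mulnSr prednK // q_gt0. Qed.

Definition realizable_mod r := realizable (r %% a).

Lemma realizable_mod_sub_rho r : realizable_mod r -> realizable_mod (r + (a - rho)).
Proof.
rewrite /realizable_mod -modnDml.
have := ltn_pmod r (ltnW a2); move: (r %% a) => g ga rg.
move: (b_eq) (rho_lt) (q_gt0) (q_le) (mul_pred_q) => bq rl q0 qd qq.
have g_bit : (0 < g : nat) <= 1 by case: (0 < g).
case: (ltngtP g rho) => hr.
- rewrite modn_small; last lia.
  right; apply: (@realizable_step g q 0 (rho - g)) => //; lia.
- rewrite (_ : g + (a - rho) = g - rho + a); last lia.
  rewrite modnDr modn_small; last lia.
  right; apply: (@realizable_step g q.-1 0 (a + rho - g)) => //; lia.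
- by left; rewrite hr subnKC ?modnn //; lia.
Qed.

(* For [0 < g < rho - 1] the move would need [q] leaves, a triangle and a child
   gadget at the root, which can exceed the degree bound. *)
Lemma realizable_mod_succ_sub_rho r :
  realizable_mod r -> r %% a = 0 \/ rho - 1 <= r %% a ->
  realizable_mod (r + (a + 1 - rho)).
Proof.
rewrite /realizable_mod -modnDml.
have := ltn_pmod r (ltnW a2); move: (r %% a) => g ga rg side.
move: (b_eq) (rho_lt) (q_gt0) (q_le) (mul_pred_q) => bq rl q0 qd qq.
have g_bit : (0 < g : nat) <= 1 by case: (0 < g).
case: (leqP rho g) => hr.
- rewrite (_ : g + (a + 1 - rho) = g + 1 - rho + a) ?modnDr; last lia.
  case: (eqVneq (g + 1 - rho) a) => [->|ne]; first by left; rewrite modnn.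
  rewrite modn_small; last lia.
  right; apply: (@realizable_step g q.-1 1 (a + rho - g - 1)) => //; lia.
- case: (eqVneq g (rho - 1)) => [->|ne].
    by left; rewrite (_ : rho - 1 + (a + 1 - rho) = a) ?modnn //; lia.
  have g0 : g = 0 by case: side; lia.
  subst g; rewrite modn_small; last lia.
  right; apply: (@realizable_step 0 q 1 (rho - 1)) => //; try lia; by left.
Qed.

Lemma realizable_mod_sub_rho_iter n r :
  realizable_mod r -> realizable_mod (r + n * (a - rho)).
Proof.
elim: n r => [|n IH] r h; first by rewrite mul0n addn0.
by rewrite mulSn addnA; apply/IH/realizable_mod_sub_rho.
Qed.

Lemma realizable_mod_add_rho r : realizable_mod r -> realizable_mod (r + rho).
Proof.
move=> /(realizable_mod_sub_rho_iter (a - 1)); rewrite /realizable_mod.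
suff -> : (r + rho) %% a = (r + (a - 1) * (a - rho)) %% a by [].
have := rho_lt => rl.
have -> : (a - 1) * (a - rho) = a * (a - rho - 1) + rho.
  rewrite mulnBl mul1n [a * (a - rho - 1)]mulnBr muln1.
  have : a <= a * (a - rho) by rewrite leq_pmulr //; lia.
  move: (a * (a - rho)) => X; lia.
by rewrite addnCA mulnC modnMDl.
Qed.

Lemma realizable_mod_succ t : t < a -> realizable_mod t -> realizable_mod t.+1.
Proof.
have := rho_lt => rl.
elim/ltn_ind: t => t IH ta h.
have tm : t %% a = t by rewrite modn_small.
case: (boolP ((t == 0) || (rho - 1 <= t))) => hc.
  have side : t %% a = 0 \/ rho - 1 <= t %% a.
    by rewrite tm; case/orP: hc => [/eqP ->|]; [left | right].
  have := realizable_mod_add_rho (realizable_mod_succ_sub_rho h side).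
  by rewrite /realizable_mod (_ : t + (a + 1 - rho) + rho = t.+1 + a) ?modnDr //; lia.
have hr := realizable_mod_add_rho h.
case: (ltnP (t + rho) a) => hl.
  have side : (t + rho) %% a = 0 \/ rho - 1 <= (t + rho) %% a.
    by rewrite modn_small //; right; lia.
  have := realizable_mod_succ_sub_rho hr side.
  by rewrite /realizable_mod (_ : t + rho + (a + 1 - rho) = t.+1 + a) ?modnDr //; lia.
have hs : realizable_mod (t + rho - a) by rewrite /realizable_mod -(modnDr _ a) subnK.
have := realizable_mod_sub_rho (IH (t + rho - a) ltac:(lia) ltac:(lia) hs).
by rewrite (_ : (t + rho - a).+1 + (a - rho) = t.+1) //; lia.
Qed.

Lemma realizable_lt g : g < a -> realizable g.
Proof.
have realizable_mod_lt t : t < a -> realizable_mod t.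
  elim: t => [|t IH] ta; first by left; rewrite mod0n.
  by apply: realizable_mod_succ; [lia | apply: IH; lia].
by move=> ga; have := realizable_mod_lt g ga; rewrite /realizable_mod modn_small.
Qed.

End Gadgets.

Theorem lemma3p6 (d a b : nat) :
  3 <= d -> 1 <= a -> a <= b -> b < a * (d - 1) ->
  forall k : nat, 1 <= k <= a ->
  exists (V : finType) (adj : rel V) (r : V),
    [/\ simple_graph adj,
        (forall v : V, deg adj v + (v == r) <= d),
        (exists lab : labeling V, good_labeling a b adj r (2 * k) lab) &
        (forall x : nat, x < 2 * k ->
           ~ exists lab : labeling V, good_labeling a b adj r x lab)].
Proof.
move=> d3 a1 ab bad k /andP [k1 ka].
have [C [simC degC] [[lab gl] least]] : threshold_gadget a b d k.
  case: (ltngtP k a) => [kla | | ->]; [ | lia | by apply: threshold_gadget_point; lia].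
  have a2 : 1 < a by lia.
  by case: (@realizable_lt a b d ab d3 a2 bad k kla) => [k0 | //]; lia.
exists (rvert C), (radj C), (rroot C); split=> //; first by exists lab.
by move=> x xk /least; lia.
Qed.
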